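(* Let $s>0$ and let $(V_s,\oplus,\otimes)$ be the Möbius gyrovector space on the open disc $V_s=\{z\in\mathbb{C}:|z|<s\}$. Let $A,B,C,D\in V_s$ be the vertices of a gyroquadrilateral $ABCD$. Let $l$ be a gyroline passing through none of the points $A,B,C,D$, such that $l$ meets the gyroline $AB$ at $X$, the gyroline $BC$ at $Y$, the gyroline $CD$ at $Z$, and the gyroline $DA$ at $W$. Then $$\frac{(AX)_\gamma}{(BX)_\gamma}\cdot\frac{(BY)_\gamma}{(CY)_\gamma}\cdot\frac{(CZ)_\gamma}{(DZ)_\gamma}\cdot\frac{(DW)_\gamma}{(AW)_\gamma}=1.$$
   Context: Möbius addition on $V_s$ is $a\oplus b=\dfrac{a+b}{1+\bar a b/s^2}$, with $\ominus a=-a$ and $a\ominus b=a\oplus(-b)$; for $s=1$ this is the Poincaré disc model of hyperbolic geometry. For points $P,Q\in V_s$, the gyrolength (hyperbolic gyrodistance) $PQ$ is $|\ominus P\oplus Q|$. Gyrolines are the geodesics of the Poincaré disc model, i.e. the sets $\{A\oplus(\ominus A\oplus B)\otimes t: t\in\mathbb{R}\}$ for distinct $A,B$ (the gyroline $AB$); equivalently, diameters of the disc and circular arcs in the disc orthogonal to its boundary. For a gyrolength $v\in(-s,s)$, the notation $v_\gamma$ means $v_\gamma=\dfrac{v}{1-\frac{v^2}{s^2}}$; thus e.g. $(AX)_\gamma$ is this quantity for $v$ the gyrolength $AX$. *)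

From Stdlib Require Import Reals.
From Coquelicot Require Import Coquelicot.
Open Scope R_scope.

Definition tanh (x : R) : R := (exp x - exp (- x)) / (exp x + exp (- x)).
Definition artanh (y : R) : R := ln ((1 + y) / (1 - y)) / 2.

Definition in_Vs (s : R) (z : C) : Prop := Cmod z < s.

Definition madd (s : R) (a b : C) : C :=
  Cdiv (Cplus a b) (Cplus (RtoC 1) (Cdiv (Cmult (Cconj a) b) (RtoC (s ^ 2)))).

Definition mopp (a : C) : C := Copp a.

Definition mscal (s : R) (r : R) (a : C) : C :=
  if Req_EM_T (Cmod a) 0 then RtoC 0
  else Cmult (RtoC (s * tanh (r * artanh (Cmod a / s)) / Cmod a)) a.

Definition gyroline (s : R) (A B : C) : C -> Prop :=
  fun P => exists t : R, P = madd s A (mscal s t (madd s (mopp A) B)).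

Definition gyrolength (s : R) (P Q : C) : R := Cmod (madd s (mopp P) Q).

Definition vgamma (s v : R) : R := v / (1 - v ^ 2 / s ^ 2).

Definition gyrocollinear (s : R) (P Q T : C) : Prop :=
  exists U V : C, in_Vs s U /\ in_Vs s V /\ U <> V /\
    gyroline s U V P /\ gyroline s U V Q /\ gyroline s U V T.

Definition gyroquadrilateral (s : R) (A B C D : C) : Prop :=
  in_Vs s A /\ in_Vs s B /\ in_Vs s C /\ in_Vs s D /\
  ~ gyrocollinear s A B C /\ ~ gyrocollinear s B C D /\
  ~ gyrocollinear s C D A /\ ~ gyrocollinear s D A B.

From Pilot Require Import Defs.
From Stdlib Require Import Reals Lra Psatz.
From Coquelicot Require Import Coquelicot.
Open Scope R_scope.

(* Lift a point z of V_s to the vector lift z = (2 s z, s^2 + |z|^2) of R^3 with the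
   Minkowski form x1 y1 + x2 y2 - x3 y3.  Up to positive factors this is the hyperboloid
   model: left Mobius addition by a acts linearly on lifts, and a gyroline is the set of
   points whose lift lies in a fixed plane through the origin.
   If X lies on the gyroline AB and on l, then lift X = p lift A + q lift B, and since
   lift X lies in the plane of l, with normal n, q / p = - <n, lift A> / <n, lift B>.
   The gamma-lengths are read off the Minkowski Gram determinants, which scale by q^2
   and p^2 respectively; hence (AX)_g / (BX)_g = f A / f B with
   f z = |<n, lift z>| / (s^2 - |z|^2), and the four ratios telescope. *)

Definition Cnorm2 (z : C) : R := fst z ^ 2 + snd z ^ 2.

Lemma Cmod_sqr z : Cmod z ^ 2 = Cnorm2 z.
Proof. unfold Cmod, Cnorm2. rewrite pow2_sqrt; nra. Qed.

Lemma Cnorm2_opp z : Cnorm2 (Copp z) = Cnorm2 z.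
Proof. destruct z; unfold Copp, Cnorm2; cbn [fst snd]; ring. Qed.

Lemma in_Vs_iff s z : 0 < s -> in_Vs s z <-> Cnorm2 z < s ^ 2.
Proof.
  intros Hs. unfold in_Vs. rewrite <- Cmod_sqr. pose proof (Cmod_ge_0 z). split; nra.
Qed.

Lemma dist2_pos (z w : C) : z <> w -> 0 < (fst w - fst z) ^ 2 + (snd w - snd z) ^ 2.
Proof.
  destruct z as [z1 z2], w as [w1 w2]; cbn [fst snd]; intros Hne.
  pose proof (pow2_ge_0 (w1 - z1)). pose proof (pow2_ge_0 (w2 - z2)).
  destruct (Rle_lt_dec ((w1 - z1) ^ 2 + (w2 - z2) ^ 2) 0) as [Hle|Hlt]; [exfalso|exact Hlt].
  apply Hne. f_equal; nra.
Qed.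

Definition madd_denom (s : R) (a v : C) : R :=
  (s ^ 2 + (fst a * fst v + snd a * snd v)) ^ 2 + (fst a * snd v - snd a * fst v) ^ 2.

Lemma madd_coords s a1 a2 v1 v2 :
  s <> 0 -> madd_denom s (a1, a2) (v1, v2) <> 0 ->
  madd s (a1, a2) (v1, v2) =
  (s ^ 2 * ((a1 + v1) * (s ^ 2 + (a1 * v1 + a2 * v2)) + (a2 + v2) * (a1 * v2 - a2 * v1))
     / madd_denom s (a1, a2) (v1, v2),
   s ^ 2 * ((a2 + v2) * (s ^ 2 + (a1 * v1 + a2 * v2)) - (a1 + v1) * (a1 * v2 - a2 * v1))
     / madd_denom s (a1, a2) (v1, v2)).
Proof.
  unfold madd_denom, madd, Cdiv, Cinv, Cmult, Cplus, Cconj, RtoC; cbn [fst snd]; intros Hs HD.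
  set (k := a1 * v1 + a2 * v2) in *. set (m := a1 * v2 - a2 * v1) in *.
  replace ((a1 * v1 - - a2 * v2) * (s ^ 2 / ((s ^ 2) ^ 2 + 0 ^ 2)) -
      (a1 * v2 + - a2 * v1) * (- 0 / ((s ^ 2) ^ 2 + 0 ^ 2))) with (k / s ^ 2)
    by (unfold k; field; auto).
  replace ((a1 * v1 - - a2 * v2) * (- 0 / ((s ^ 2) ^ 2 + 0 ^ 2)) +
      (a1 * v2 + - a2 * v1) * (s ^ 2 / ((s ^ 2) ^ 2 + 0 ^ 2))) with (m / s ^ 2)
    by (unfold m; field; auto).
  replace (0 + m / s ^ 2) with (m / s ^ 2) by ring.
  replace ((1 + k / s ^ 2) ^ 2 + (m / s ^ 2) ^ 2) with (((s ^ 2 + k) ^ 2 + m ^ 2) / s ^ 4)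
    by (field; auto).
  f_equal; field; auto.
Qed.

Lemma madd_denom_pos s a v :
  0 < s -> Cnorm2 a < s ^ 2 -> Cnorm2 v < s ^ 2 -> 0 < madd_denom s a v.
Proof.
  destruct a as [a1 a2], v as [v1 v2]; unfold Cnorm2, madd_denom; cbn [fst snd]; intros.
  (* |a . v| <= (|a|^2 + |v|^2) / 2 < s^2 *)
  assert (0 < s ^ 2 + (a1 * v1 + a2 * v2))
    by (pose proof (pow2_ge_0 (a1 + v1)); pose proof (pow2_ge_0 (a2 + v2)); nra).
  pose proof (pow2_ge_0 (a1 * v2 - a2 * v1)). pose proof (pow_lt _ 2 H2). lra.
Qed.

Lemma madd_Cnorm2 s a v : 0 < s -> Cnorm2 a < s ^ 2 -> Cnorm2 v < s ^ 2 ->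
  s ^ 2 - Cnorm2 (madd s a v) = s ^ 2 * (s ^ 2 - Cnorm2 a) * (s ^ 2 - Cnorm2 v) / madd_denom s a v.
Proof.
  intros Hs Ha Hv. pose proof (madd_denom_pos s a v Hs Ha Hv) as HD.
  destruct a as [a1 a2], v as [v1 v2].
  rewrite madd_coords by (apply Rgt_not_eq; lra).
  unfold Cnorm2, madd_denom in *; cbn [fst snd] in *.
  field; lra.
Qed.

Lemma madd_closed s a v : 0 < s -> Cnorm2 a < s ^ 2 -> Cnorm2 v < s ^ 2 ->
  Cnorm2 (madd s a v) < s ^ 2.
Proof.
  intros Hs Ha Hv. pose proof (madd_Cnorm2 s a v Hs Ha Hv).
  pose proof (madd_denom_pos s a v Hs Ha Hv).
  assert (0 < s ^ 2 * (s ^ 2 - Cnorm2 a) * (s ^ 2 - Cnorm2 v) / madd_denom s a v)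
    by (pose proof (pow_lt s 2 Hs);
        apply Rdiv_lt_0_compat; auto; repeat apply Rmult_lt_0_compat; lra).
  lra.
Qed.

Lemma madd_0_r s a : madd s a (RtoC 0) = a.
Proof.
  unfold madd, Cdiv. rewrite Cmult_0_r, Cmult_0_l, !Cplus_0_r. field.
Qed.

Definition V3 := (R * R * R)%type.

Definition vcomb (a : R) (x : V3) (b : R) (y : V3) : V3 :=
  (a * fst (fst x) + b * fst (fst y), a * snd (fst x) + b * snd (fst y), a * snd x + b * snd y).
Definition vscale (c : R) (x : V3) : V3 := (c * fst (fst x), c * snd (fst x), c * snd x).

Definition lift (s : R) (z : C) : V3 := (2 * s * fst z, 2 * s * snd z, s ^ 2 + Cnorm2 z).

Definition madd_lin (s : R) (a : C) (x : V3) : V3 :=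
  let a1 := fst a in let a2 := snd a in
  let x1 := fst (fst x) in let x2 := snd (fst x) in let x3 := snd x in
  (2 * s * a1 * x3 + s ^ 2 * x1 + (a1 ^ 2 - a2 ^ 2) * x1 + 2 * a1 * a2 * x2,
   2 * s * a2 * x3 + s ^ 2 * x2 + 2 * a1 * a2 * x1 - (a1 ^ 2 - a2 ^ 2) * x2,
   (s ^ 2 + a1 ^ 2 + a2 ^ 2) * x3 + 2 * s * (a1 * x1 + a2 * x2)).

Ltac v3_destruct x := destruct x as [[? ?] ?].
Ltac v3_unfold := unfold vcomb, vscale, madd_lin, lift, Cnorm2 in *; cbn [fst snd] in *.
Ltac v3_ring := f_equal; [f_equal|]; ring.

Lemma madd_lin_comb s a p x q y :
  madd_lin s a (vcomb p x q y) = vcomb p (madd_lin s a x) q (madd_lin s a y).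
Proof. v3_destruct x; v3_destruct y; v3_unfold; v3_ring. Qed.

Lemma madd_lin_scale s a c x : madd_lin s a (vscale c x) = vscale c (madd_lin s a x).
Proof. v3_destruct x; v3_unfold; v3_ring. Qed.

Lemma madd_lin_opp s a x :
  madd_lin s a (madd_lin s (Copp a) x) = vscale ((s ^ 2 - Cnorm2 a) ^ 2) x.
Proof. v3_destruct x; destruct a; unfold Copp; v3_unfold; v3_ring. Qed.

Lemma madd_lin_oppV s a x :
  madd_lin s (Copp a) (madd_lin s a x) = vscale ((s ^ 2 - Cnorm2 a) ^ 2) x.
Proof. v3_destruct x; destruct a; unfold Copp; v3_unfold; v3_ring. Qed.

Lemma madd_lin_lift0 s a : madd_lin s a (lift s (0, 0)) = vscale (s ^ 2) (lift s a).
Proof. destruct a; v3_unfold; v3_ring. Qed.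

Lemma vcomb_scale a c x b d y : vcomb a (vscale c x) b (vscale d y) = vcomb (a * c) x (b * d) y.
Proof. v3_destruct x; v3_destruct y; v3_unfold; v3_ring. Qed.

Lemma vscale_comb c a x b y : vscale c (vcomb a x b y) = vcomb (c * a) x (c * b) y.
Proof. v3_destruct x; v3_destruct y; v3_unfold; v3_ring. Qed.

Lemma vscale_scale c d x : vscale c (vscale d x) = vscale (c * d) x.
Proof. v3_destruct x; v3_unfold; v3_ring. Qed.

Lemma vscale_eq_inv c x y : c <> 0 -> vscale c x = y -> x = vscale (/ c) y.
Proof. intros Hc <-. v3_destruct x; v3_unfold; f_equal; [f_equal|]; field; auto. Qed.

Lemma lift_madd s a v : 0 < s -> Cnorm2 a < s ^ 2 -> Cnorm2 v < s ^ 2 ->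
  vscale (madd_denom s a v / s ^ 2) (lift s (madd s a v)) = madd_lin s a (lift s v).
Proof.
  intros Hs Ha Hv. pose proof (madd_denom_pos s a v Hs Ha Hv) as HD.
  destruct a as [a1 a2], v as [v1 v2].
  rewrite madd_coords by (apply Rgt_not_eq; lra).
  unfold madd_denom in *; v3_unfold; f_equal; [f_equal|]; field; lra.
Qed.

Lemma lift_proportional_eq s z w mu : 0 < s -> Cnorm2 z < s ^ 2 -> Cnorm2 w < s ^ 2 ->
  lift s w = vscale mu (lift s z) -> w = z.
Proof.
  intros Hs Hz Hw E. destruct z as [z1 z2], w as [w1 w2]. v3_unfold.
  injection E as E1 E2 E3.
  assert (w1 = mu * z1) by (apply (Rmult_eq_reg_l (2 * s)); [lra | nra]).
  assert (w2 = mu * z2) by (apply (Rmult_eq_reg_l (2 * s)); [lra | nra]).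
  subst w1 w2.
  (* the third coordinate forces mu = 1 or mu |z|^2 = s^2, and the latter puts w outside *)
  assert (F : (mu - 1) * (mu * (z1 ^ 2 + z2 ^ 2) - s ^ 2) = 0) by nra.
  apply Rmult_integral in F. destruct F as [F|F].
  - replace mu with 1 by lra. f_equal; ring.
  - exfalso. assert (0 < s ^ 2) by nra.
    assert (0 < z1 ^ 2 + z2 ^ 2) by nra.
    assert (1 < mu) by nra. nra.
Qed.

Lemma madd_cancel_l s a b : 0 < s -> Cnorm2 a < s ^ 2 -> Cnorm2 b < s ^ 2 ->
  madd s a (madd s (mopp a) b) = b.
Proof.
  intros Hs Ha Hb. unfold mopp.
  assert (Ha' : Cnorm2 (Copp a) < s ^ 2) by (rewrite Cnorm2_opp; auto).
  set (u := madd s (Copp a) b).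
  assert (Hu : Cnorm2 u < s ^ 2) by (apply madd_closed; auto).
  pose proof (lift_madd s a u Hs Ha Hu) as T1.
  pose proof (lift_madd s (Copp a) b Hs Ha' Hb) as T2.
  pose proof (madd_denom_pos s a u Hs Ha Hu) as D1.
  pose proof (madd_denom_pos s (Copp a) b Hs Ha' Hb) as D2.
  apply vscale_eq_inv in T2; [|apply Rgt_not_eq, Rdiv_lt_0_compat; nra].
  fold u in T2. rewrite T2, madd_lin_scale, madd_lin_opp, vscale_scale in T1.
  apply vscale_eq_inv in T1; [|apply Rgt_not_eq, Rdiv_lt_0_compat; nra].
  rewrite vscale_scale in T1.
  exact (lift_proportional_eq s b _ _ Hs Hb (madd_closed s a u Hs Ha Hu) T1).
Qed.

Lemma Cmod_madd_opp_pos s a b : 0 < s -> Cnorm2 a < s ^ 2 -> Cnorm2 b < s ^ 2 -> a <> b ->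
  0 < Cmod (madd s (mopp a) b).
Proof.
  intros Hs Ha Hb Hne.
  destruct (Cmod_ge_0 (madd s (mopp a) b)) as [|Z]; auto. exfalso. apply Hne.
  symmetry in Z. apply Cmod_eq_0 in Z.
  rewrite <- (madd_cancel_l s a b), Z, madd_0_r by auto. reflexivity.
Qed.

Lemma tanh_sqr_lt1 x : Defs.tanh x ^ 2 < 1.
Proof.
  unfold Defs.tanh. pose proof (exp_pos x). pose proof (exp_pos (- x)).
  replace (((exp x - exp (- x)) / (exp x + exp (- x))) ^ 2)
    with ((exp x - exp (- x)) ^ 2 / (exp x + exp (- x)) ^ 2) by (field; lra).
  apply (Rdiv_lt_1 _ _ (pow_lt _ 2 (Rplus_lt_0_compat _ _ H H0))). nra.
Qed.

Lemma tanh_artanh y : -1 < y < 1 -> Defs.tanh (artanh y) = y.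
Proof.
  intros Hy. unfold Defs.tanh, artanh.
  set (r := (1 + y) / (1 - y)).
  assert (Hr : 0 < r) by (unfold r; apply Rdiv_lt_0_compat; lra).
  set (e := exp (ln r / 2)).
  assert (He : 0 < e) by apply exp_pos.
  assert (He2 : e * e = r).
  { unfold e. rewrite <- exp_plus. replace (ln r / 2 + ln r / 2) with (ln r) by field.
    apply exp_ln; auto. }
  rewrite exp_Ropp. fold e.
  replace ((e - / e) / (e + / e)) with ((e * e - 1) / (e * e + 1)) by (field; lra).
  rewrite He2. unfold r. field. lra.
Qed.

Lemma artanh_pos y : 0 < y < 1 -> 0 < artanh y.
Proof.
  intros Hy. unfold artanh. apply Rdiv_lt_0_compat; [|lra].
  rewrite <- ln_1. apply ln_increasing; [lra|].
  apply Rlt_div_r; lra.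
Qed.

Lemma mscal_real_multiple s t u : 0 < s ->
  exists k, mscal s t u = (k * fst u, k * snd u) /\ Cnorm2 (mscal s t u) < s ^ 2.
Proof.
  intros Hs. unfold mscal. destruct (Req_EM_T (Cmod u) 0) as [H|H].
  - exists 0. unfold RtoC, Cnorm2; cbn [fst snd]. split; [f_equal; ring | nra].
  - set (th := Defs.tanh (t * artanh (Cmod u / s))).
    exists (s * th / Cmod u). unfold RtoC, Cmult; cbn [fst snd]. split; [f_equal; ring|].
    pose proof (Cmod_sqr u) as Hu. unfold Cnorm2 in *; cbn [fst snd].
    replace ((s * th / Cmod u * fst u - 0 * snd u) ^ 2 + (s * th / Cmod u * snd u + 0 * fst u) ^ 2)
      with ((s * th / Cmod u) ^ 2 * Cmod u ^ 2) by (rewrite Hu; ring).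
    replace ((s * th / Cmod u) ^ 2 * Cmod u ^ 2) with (s ^ 2 * th ^ 2) by (field; auto).
    pose proof (tanh_sqr_lt1 (t * artanh (Cmod u / s))). fold th in H0.
    pose proof (pow_lt s 2 Hs). nra.
Qed.

Lemma mscal_multiple s u k : 0 < s -> 0 < Cmod u < s -> (k * Cmod u) ^ 2 < s ^ 2 ->
  mscal s (artanh (k * Cmod u / s) / artanh (Cmod u / s)) u = (k * fst u, k * snd u).
Proof.
  intros Hs [Hu0 Hus] Hk.
  assert (Hpos : 0 < artanh (Cmod u / s)).
  { apply artanh_pos. split; [apply Rdiv_lt_0_compat | apply (Rdiv_lt_1 _ _ Hs)]; auto. }
  assert (Hk' : -1 < k * Cmod u / s < 1).
  { split; [apply (Rlt_div_r _ _ _ Hs) | apply (Rlt_div_l _ _ _ Hs)]; nra. }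
  unfold mscal. destruct (Req_EM_T (Cmod u) 0) as [Z|_]; [lra|].
  replace (artanh (k * Cmod u / s) / artanh (Cmod u / s) * artanh (Cmod u / s))
    with (artanh (k * Cmod u / s)) by (field; lra).
  rewrite tanh_artanh by auto.
  replace (s * (k * Cmod u / s) / Cmod u) with k by (field; lra).
  unfold RtoC, Cmult; cbn [fst snd]. f_equal; ring.
Qed.

Lemma lift_real_multiple s k u : 0 < s ->
  lift s (k * fst u, k * snd u) =
  vcomb ((s ^ 2 * (1 - k) + Cnorm2 u * (k ^ 2 - k)) / s ^ 2) (lift s (0, 0)) k (lift s u).
Proof. intros Hs. destruct u; v3_unfold; f_equal; [f_equal|]; field; lra. Qed.

Lemma lift_comb_lift0 s w a b u : 0 < s ->
  lift s w = vcomb a (lift s (0, 0)) b (lift s u) -> w = (b * fst u, b * snd u).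
Proof.
  intros Hs E. destruct w as [w1 w2], u as [u1 u2]. v3_unfold.
  injection E as E1 E2 _.
  f_equal; apply (Rmult_eq_reg_l (2 * s)); nra.
Qed.

Lemma madd_lin_lift_oppl s a b : 0 < s -> Cnorm2 a < s ^ 2 -> Cnorm2 b < s ^ 2 ->
  madd_lin s a (lift s (madd s (mopp a) b)) =
  vscale (/ (madd_denom s (Copp a) b / s ^ 2) * (s ^ 2 - Cnorm2 a) ^ 2) (lift s b).
Proof.
  intros Hs Ha Hb. unfold mopp.
  assert (Ha' : Cnorm2 (Copp a) < s ^ 2) by (rewrite Cnorm2_opp; auto).
  pose proof (lift_madd s (Copp a) b Hs Ha' Hb) as T.
  pose proof (madd_denom_pos s (Copp a) b Hs Ha' Hb) as D.
  apply vscale_eq_inv in T; [|apply Rgt_not_eq, Rdiv_lt_0_compat; nra].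
  rewrite T, madd_lin_scale, madd_lin_opp, vscale_scale. reflexivity.
Qed.

Lemma madd_lin_opp_lift s a : 0 < s ->
  madd_lin s (Copp a) (lift s a) = vscale (/ s ^ 2 * (s ^ 2 - Cnorm2 a) ^ 2) (lift s (0, 0)).
Proof.
  intros Hs. pose proof (eq_sym (madd_lin_lift0 s a)) as E.
  apply vscale_eq_inv in E; [|apply Rgt_not_eq, pow_lt; lra].
  rewrite E, madd_lin_scale, madd_lin_oppV, vscale_scale. reflexivity.
Qed.

Lemma gyroline_lift_span s a b z : 0 < s -> Cnorm2 a < s ^ 2 -> Cnorm2 b < s ^ 2 ->
  gyroline s a b z ->
  Cnorm2 z < s ^ 2 /\ exists p q, lift s z = vcomb p (lift s a) q (lift s b).
Proof.
  intros Hs Ha Hb [t ->].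
  set (u := madd s (mopp a) b).
  assert (Hu : Cnorm2 u < s ^ 2)
    by (apply madd_closed; auto; unfold mopp; rewrite Cnorm2_opp; auto).
  destruct (mscal_real_multiple s t u Hs) as [k [Hw Hwin]].
  rewrite Hw in Hwin |- *.
  split; [apply madd_closed; auto|].
  pose proof (lift_madd s a _ Hs Ha Hwin) as T.
  pose proof (madd_denom_pos s a _ Hs Ha Hwin) as D.
  rewrite lift_real_multiple, madd_lin_comb, madd_lin_lift0 in T by auto.
  unfold u in T, D. rewrite madd_lin_lift_oppl, vcomb_scale in T by auto.
  apply vscale_eq_inv in T; [|apply Rgt_not_eq, Rdiv_lt_0_compat; nra].
  rewrite vscale_comb in T. eauto.
Qed.

Lemma lift_span_gyroline s a b z p q :
  0 < s -> Cnorm2 a < s ^ 2 -> Cnorm2 b < s ^ 2 -> Cnorm2 z < s ^ 2 -> a <> b ->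
  lift s z = vcomb p (lift s a) q (lift s b) -> gyroline s a b z.
Proof.
  intros Hs Ha Hb Hz Hne E.
  assert (Ha' : Cnorm2 (mopp a) < s ^ 2) by (unfold mopp; rewrite Cnorm2_opp; auto).
  set (u := madd s (mopp a) b). set (w := madd s (mopp a) z).
  assert (Hu : Cnorm2 u < s ^ 2) by (apply madd_closed; auto).
  assert (Hw : Cnorm2 w < s ^ 2) by (apply madd_closed; auto).
  (* translating by -a maps a to the origin, so w = (-a) (+) z is a real multiple of u *)
  assert (Hwu : exists k, w = (k * fst u, k * snd u)).
  { pose proof (lift_madd s (mopp a) z Hs Ha' Hz) as TW.
    pose proof (lift_madd s (mopp a) b Hs Ha' Hb) as TU.
    pose proof (madd_denom_pos s (mopp a) z Hs Ha' Hz) as DW.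
    fold w in TW. fold u in TU.
    rewrite E, madd_lin_comb, madd_lin_opp_lift, <- TU, vcomb_scale in TW by auto.
    apply vscale_eq_inv in TW; [|apply Rgt_not_eq, Rdiv_lt_0_compat; nra].
    rewrite vscale_comb in TW. eexists. exact (lift_comb_lift0 s w _ _ u Hs TW). }
  destruct Hwu as [k Hwu].
  pose proof (Cmod_madd_opp_pos s a b Hs Ha Hb Hne) as Hu0. fold u in Hu0.
  assert (Hus : Cmod u < s) by (pose proof (Cmod_sqr u); nra).
  assert (Hk : (k * Cmod u) ^ 2 < s ^ 2).
  { replace ((k * Cmod u) ^ 2) with (Cnorm2 w); auto.
    rewrite Rpow_mult_distr, Cmod_sqr, Hwu. unfold Cnorm2; cbn [fst snd]. ring. }
  exists (artanh (k * Cmod u / s) / artanh (Cmod u / s)). fold u.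
  rewrite mscal_multiple, <- Hwu by auto.
  symmetry. apply madd_cancel_l; auto.
Qed.

Definition mink (x y : V3) : R :=
  fst (fst x) * fst (fst y) + snd (fst x) * snd (fst y) - snd x * snd y.
(* minus the Minkowski Gram determinant; for lifts, a multiple of sinh^2 of the distance *)
Definition gram (x y : V3) : R := mink x y ^ 2 - mink x x * mink y y.

Lemma gram_comb_r x a b y : gram x (vcomb a x b y) = b ^ 2 * gram x y.
Proof. v3_destruct x; v3_destruct y; unfold gram, mink; v3_unfold; ring. Qed.

Lemma gram_comb_l x a b y : gram y (vcomb a x b y) = a ^ 2 * gram x y.
Proof. v3_destruct x; v3_destruct y; unfold gram, mink; v3_unfold; ring. Qed.

Lemma gram_lift s z w : gram (lift s z) (lift s w) =
  4 * s ^ 2 * ((fst w - fst z) ^ 2 + (snd w - snd z) ^ 2) * madd_denom s (Copp z) w.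
Proof. destruct z, w; unfold gram, mink, madd_denom, Copp; v3_unfold; ring. Qed.

Lemma gram_lift_pos s z w : 0 < s -> Cnorm2 z < s ^ 2 -> Cnorm2 w < s ^ 2 -> z <> w ->
  0 < gram (lift s z) (lift s w).
Proof.
  intros Hs Hz Hw Hne. rewrite gram_lift.
  assert (Hz' : Cnorm2 (Copp z) < s ^ 2) by (rewrite Cnorm2_opp; auto).
  pose proof (madd_denom_pos s (Copp z) w Hs Hz' Hw).
  pose proof (dist2_pos z w Hne). pose proof (pow_lt s 2 Hs).
  repeat apply Rmult_lt_0_compat; lra.
Qed.

Lemma gyrolength_bounds s z w : 0 < s -> Cnorm2 z < s ^ 2 -> Cnorm2 w < s ^ 2 -> z <> w ->
  0 < gyrolength s z w < s.
Proof.
  intros Hs Hz Hw Hne. unfold gyrolength.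
  set (u := madd s (mopp z) w).
  assert (Hu : Cnorm2 u < s ^ 2)
    by (apply madd_closed; auto; unfold mopp; rewrite Cnorm2_opp; auto).
  split.
  - apply Cmod_madd_opp_pos; auto.
  - pose proof (Cmod_sqr u). pose proof (Cmod_ge_0 u). nra.
Qed.

Lemma vgamma_pos s v : 0 < v < s -> 0 < vgamma s v.
Proof.
  intros Hv. unfold vgamma. apply Rdiv_lt_0_compat; [lra|].
  assert (v ^ 2 / s ^ 2 < 1) by (apply (Rdiv_lt_1 _ _ (pow_lt s 2 ltac:(lra))); nra).
  lra.
Qed.

Lemma gyrolength_sqr s z w : 0 < s -> Cnorm2 z < s ^ 2 -> Cnorm2 w < s ^ 2 ->
  gyrolength s z w ^ 2 =
  s ^ 4 * ((fst w - fst z) ^ 2 + (snd w - snd z) ^ 2) / madd_denom s (Copp z) w.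
Proof.
  intros Hs Hz Hw. unfold gyrolength, mopp. rewrite Cmod_sqr.
  assert (Hz' : Cnorm2 (Copp z) < s ^ 2) by (rewrite Cnorm2_opp; auto).
  pose proof (madd_Cnorm2 s (Copp z) w Hs Hz' Hw) as E. rewrite Cnorm2_opp in E.
  pose proof (madd_denom_pos s (Copp z) w Hs Hz' Hw) as D.
  replace (Cnorm2 (madd s (Copp z) w))
    with (s ^ 2 - s ^ 2 * (s ^ 2 - Cnorm2 z) * (s ^ 2 - Cnorm2 w) / madd_denom s (Copp z) w)
    by lra.
  destruct z, w. unfold madd_denom, Cnorm2, Copp in *; cbn [fst snd] in *. field. lra.
Qed.

Lemma vgamma_gyrolength_sqr s z w : 0 < s -> Cnorm2 z < s ^ 2 -> Cnorm2 w < s ^ 2 ->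
  vgamma s (gyrolength s z w) ^ 2 * (4 * (s ^ 2 - Cnorm2 z) ^ 2 * (s ^ 2 - Cnorm2 w) ^ 2)
  = s ^ 2 * gram (lift s z) (lift s w).
Proof.
  intros Hs Hz Hw. unfold vgamma.
  assert (Hz' : Cnorm2 (Copp z) < s ^ 2) by (rewrite Cnorm2_opp; auto).
  pose proof (madd_denom_pos s (Copp z) w Hs Hz' Hw) as D.
  pose proof (gyrolength_sqr s z w Hs Hz Hw) as E.
  assert (Hv : s ^ 2 - gyrolength s z w ^ 2 =
               s ^ 2 * (s ^ 2 - Cnorm2 z) * (s ^ 2 - Cnorm2 w) / madd_denom s (Copp z) w).
  { unfold gyrolength, mopp. rewrite Cmod_sqr, madd_Cnorm2, Cnorm2_opp; auto. }
  set (v := gyrolength s z w) in *.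
  assert (Hv0 : s ^ 2 - v ^ 2 <> 0).
  { rewrite Hv. apply Rgt_not_eq, Rdiv_lt_0_compat; auto. pose proof (pow_lt s 2 Hs).
    repeat apply Rmult_lt_0_compat; lra. }
  replace ((v / (1 - v ^ 2 / s ^ 2)) ^ 2) with (v ^ 2 * s ^ 4 / (s ^ 2 - v ^ 2) ^ 2)
    by (field; split; [apply Rgt_not_eq; exact Hs | exact Hv0]).
  rewrite Hv, E, gram_lift.
  destruct z, w. unfold madd_denom, Cnorm2, Copp in *; cbn [fst snd] in *.
  field. lra.
Qed.

Definition cross (x y : V3) : V3 :=
  let x1 := fst (fst x) in let x2 := snd (fst x) in let x3 := snd x in
  let y1 := fst (fst y) in let y2 := snd (fst y) in let y3 := snd y in
  (x2 * y3 - x3 * y2, x3 * y1 - x1 * y3, x1 * y2 - x2 * y1).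
Definition dot (x y : V3) : R :=
  fst (fst x) * fst (fst y) + snd (fst x) * snd (fst y) + snd x * snd y.

Lemma dot_comb n a x b y : dot n (vcomb a x b y) = a * dot n x + b * dot n y.
Proof. v3_destruct n; v3_destruct x; v3_destruct y; unfold dot; v3_unfold; ring. Qed.

Lemma dot_cross_comb x y a b : dot (cross x y) (vcomb a x b y) = 0.
Proof. v3_destruct x; v3_destruct y; unfold dot, cross; v3_unfold; ring. Qed.

Lemma gram_cross x y : gram x y =
  fst (fst (cross x y)) ^ 2 + snd (fst (cross x y)) ^ 2 - snd (cross x y) ^ 2.
Proof. v3_destruct x; v3_destruct y; unfold gram, mink, cross; cbn [fst snd]; ring. Qed.

Lemma cross_decomp x y v :
  vscale (dot (cross x y) (cross x y)) v =
  vcomb 1 (vcomb (dot (cross v y) (cross x y)) x (dot (cross x v) (cross x y)) y)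
        (dot (cross x y) v) (cross x y).
Proof. v3_destruct x; v3_destruct y; v3_destruct v; unfold dot, cross; v3_unfold; v3_ring. Qed.

Lemma cross_orth_span x y v : dot (cross x y) v = 0 ->
  vscale (dot (cross x y) (cross x y)) v =
  vcomb (dot (cross v y) (cross x y)) x (dot (cross x v) (cross x y)) y.
Proof.
  intros H. rewrite cross_decomp, H.
  destruct (vcomb _ x _ y) as [[? ?] ?]; v3_unfold; v3_ring.
Qed.

Lemma gyroline_lift_orth s a b z : 0 < s -> Cnorm2 a < s ^ 2 -> Cnorm2 b < s ^ 2 ->
  gyroline s a b z -> Cnorm2 z < s ^ 2 /\ dot (cross (lift s a) (lift s b)) (lift s z) = 0.
Proof.
  intros Hs Ha Hb Hz. destruct (gyroline_lift_span s a b z Hs Ha Hb Hz) as [Hin [p [q E]]].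
  split; auto. rewrite E. apply dot_cross_comb.
Qed.

Lemma lift_orth_gyroline s a b z :
  0 < s -> Cnorm2 a < s ^ 2 -> Cnorm2 b < s ^ 2 -> Cnorm2 z < s ^ 2 -> a <> b ->
  dot (cross (lift s a) (lift s b)) (lift s z) = 0 -> gyroline s a b z.
Proof.
  intros Hs Ha Hb Hz Hne Horth.
  pose proof (gram_lift_pos s a b Hs Ha Hb Hne) as G.
  rewrite gram_cross in G.
  set (n := cross (lift s a) (lift s b)) in *.
  assert (Hn : 0 < dot n n) by (unfold dot; pose proof (pow2_ge_0 (snd n)); nra).
  apply cross_orth_span, vscale_eq_inv in Horth; [|apply Rgt_not_eq; exact Hn].
  rewrite vscale_comb in Horth.
  exact (lift_span_gyroline s a b z _ _ Hs Ha Hb Hz Hne Horth).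
Qed.

(* For the normal n of the plane lifting a gyroline, this is a fixed multiple of the
   hyperbolic sine of the distance from z to that gyroline. *)
Definition line_offset (s : R) (n : V3) (z : C) : R :=
  Rabs (dot n (lift s z)) / (s ^ 2 - Cnorm2 z).

Lemma line_offset_pos s a b z :
  0 < s -> Cnorm2 a < s ^ 2 -> Cnorm2 b < s ^ 2 -> Cnorm2 z < s ^ 2 -> a <> b ->
  ~ gyroline s a b z -> 0 < line_offset s (cross (lift s a) (lift s b)) z.
Proof.
  intros Hs Ha Hb Hz Hne Hoff. unfold line_offset.
  apply Rdiv_lt_0_compat; [|lra]. apply Rabs_pos_lt.
  intro Horth. exact (Hoff (lift_orth_gyroline s a b z Hs Ha Hb Hz Hne Horth)).
Qed.

Lemma ratio_of_sqr_relations s vx vy p q g nx ny dx dy dz :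
  s <> 0 -> 0 < vx -> 0 < vy -> 0 < dx -> 0 < dy -> 0 < dz -> nx <> 0 -> ny <> 0 ->
  vx ^ 2 * (4 * dx ^ 2 * dz ^ 2) = s ^ 2 * (q ^ 2 * g) ->
  vy ^ 2 * (4 * dy ^ 2 * dz ^ 2) = s ^ 2 * (p ^ 2 * g) ->
  p * nx + q * ny = 0 ->
  vx / vy = Rabs nx / dx / (Rabs ny / dy).
Proof.
  intros Hs Hvx Hvy Hdx Hdy Hdz Hnx Hny Fx Fy Horth.
  assert (Hpg : p ^ 2 * g <> 0).
  { intro H0. rewrite H0, Rmult_0_r in Fy. revert Fy. apply Rgt_not_eq.
    pose proof (pow_lt vy 2 Hvy). pose proof (pow_lt dy 2 Hdy). pose proof (pow_lt dz 2 Hdz).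
    repeat apply Rmult_lt_0_compat; lra. }
  assert (Hp : p <> 0) by (intro H0; apply Hpg; rewrite H0; ring).
  assert (Hg : g <> 0) by (intro H0; apply Hpg; rewrite H0; ring).
  assert (Eq : q = - p * nx / ny) by (field_simplify_eq; lra).
  apply Rsqr_inj; try (apply Rlt_le, Rdiv_lt_0_compat; try apply Rdiv_lt_0_compat;
                       try apply Rabs_pos_lt; assumption).
  unfold Rsqr.
  replace (vx / vy * (vx / vy)) with (vx ^ 2 / vy ^ 2) by (field; lra).
  replace (Rabs nx / dx / (Rabs ny / dy) * (Rabs nx / dx / (Rabs ny / dy)))
    with (Rabs nx ^ 2 * dy ^ 2 / (Rabs ny ^ 2 * dx ^ 2))
    by (field; repeat split; try lra; apply Rabs_no_R0; auto).
  replace (vx ^ 2) with (s ^ 2 * (q ^ 2 * g) / (4 * dx ^ 2 * dz ^ 2))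
    by (rewrite <- Fx; field; lra).
  replace (vy ^ 2) with (s ^ 2 * (p ^ 2 * g) / (4 * dy ^ 2 * dz ^ 2))
    by (rewrite <- Fy; field; lra).
  rewrite !pow2_abs, Eq. field. repeat split; try lra; auto.
Qed.

Lemma vgamma_ratio_secant s a b x y z :
  0 < s -> Cnorm2 a < s ^ 2 -> Cnorm2 b < s ^ 2 -> Cnorm2 x < s ^ 2 -> Cnorm2 y < s ^ 2 ->
  a <> b -> ~ gyroline s a b x -> ~ gyroline s a b y ->
  gyroline s a b z -> gyroline s x y z ->
  vgamma s (gyrolength s x z) / vgamma s (gyrolength s y z) =
  line_offset s (cross (lift s a) (lift s b)) x / line_offset s (cross (lift s a) (lift s b)) y.
Proof.
  intros Hs Ha Hb Hx Hy Hne Hxl Hyl Hzl Hzxy.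
  pose proof (line_offset_pos s a b x Hs Ha Hb Hx Hne Hxl) as Ox.
  pose proof (line_offset_pos s a b y Hs Ha Hb Hy Hne Hyl) as Oy.
  destruct (gyroline_lift_orth s a b z Hs Ha Hb Hzl) as [Hz Horth].
  destruct (gyroline_lift_span s x y z Hs Hx Hy Hzxy) as [_ [p [q E]]].
  assert (Hxz : x <> z) by (intros <-; auto).
  assert (Hyz : y <> z) by (intros <-; auto).
  pose proof (vgamma_gyrolength_sqr s x z Hs Hx Hz) as Fx.
  pose proof (vgamma_gyrolength_sqr s y z Hs Hy Hz) as Fy.
  rewrite E, gram_comb_r in Fx. rewrite E, gram_comb_l in Fy. rewrite E, dot_comb in Horth.
  pose proof (vgamma_pos s _ (gyrolength_bounds s x z Hs Hx Hz Hxz)) as Vx.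
  pose proof (vgamma_pos s _ (gyrolength_bounds s y z Hs Hy Hz Hyz)) as Vy.
  assert (Hs0 : s <> 0) by (apply Rgt_not_eq; exact Hs).
  unfold line_offset in *.
  assert (Nx : dot (cross (lift s a) (lift s b)) (lift s x) <> 0)
    by (intro H0; rewrite H0, Rabs_R0 in Ox; lra).
  assert (Ny : dot (cross (lift s a) (lift s b)) (lift s y) <> 0)
    by (intro H0; rewrite H0, Rabs_R0 in Oy; lra).
  apply (ratio_of_sqr_relations s _ _ p q (gram (lift s x) (lift s y)) _ _ _ _ (s ^ 2 - Cnorm2 z));
    try assumption; lra.
Qed.

Theorem theorem3 (s : R) (A B C D P Q X Y Z W : C) :
  0 < s ->
  gyroquadrilateral s A B C D ->
  in_Vs s P -> in_Vs s Q -> P <> Q ->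
  ~ gyroline s P Q A -> ~ gyroline s P Q B ->
  ~ gyroline s P Q C -> ~ gyroline s P Q D ->
  gyroline s P Q X -> gyroline s A B X ->
  gyroline s P Q Y -> gyroline s B C Y ->
  gyroline s P Q Z -> gyroline s C D Z ->
  gyroline s P Q W -> gyroline s D A W ->
  vgamma s (gyrolength s A X) / vgamma s (gyrolength s B X) *
  (vgamma s (gyrolength s B Y) / vgamma s (gyrolength s C Y)) *
  (vgamma s (gyrolength s C Z) / vgamma s (gyrolength s D Z)) *
  (vgamma s (gyrolength s D W) / vgamma s (gyrolength s A W)) = 1.
Proof.
  intros Hs [HA [HB [HC [HD _]]]] HP HQ Hne nA nB nC nD X1 X2 Y1 Y2 Z1 Z2 W1 W2.
  rewrite in_Vs_iff in HA, HB, HC, HD, HP, HQ by exact Hs.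
  rewrite (vgamma_ratio_secant s P Q A B X), (vgamma_ratio_secant s P Q B C Y),
    (vgamma_ratio_secant s P Q C D Z), (vgamma_ratio_secant s P Q D A W) by assumption.
  pose proof (line_offset_pos s P Q A Hs HP HQ HA Hne nA).
  pose proof (line_offset_pos s P Q B Hs HP HQ HB Hne nB).
  pose proof (line_offset_pos s P Q C Hs HP HQ HC Hne nC).
  pose proof (line_offset_pos s P Q D Hs HP HQ HD Hne nD).
  field. repeat split; apply Rgt_not_eq; assumption.
Qed.
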